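(* Let $G=(V,E)$ be an undirected graph and let $\mathcal{F}$ be a $(\kappa,t)$-packing of $G$. Then the induced packing graph $H=G_{\mathcal{F}}$ satisfies $$\frac{|E(H)|}{|V(H)|}\le 2(t+1)^2\kappa^2\,\nabla_t(G)+\kappa.$$
   Context: A graph $K$ is $t$-shallow if there is a vertex $h$ such that every vertex of $K$ is joined to $h$ by a path in $K$ with at most $t$ edges. A $(\kappa,t)$-packing of $G$ is a multiset $\mathcal{F}$ of subsets $C\subseteq V$ such that each induced subgraph $G[C]$ is $t$-shallow and every vertex of $V$ lies in at most $\kappa$ members of $\mathcal{F}$ (counted with multiplicity). The induced packing graph $G_{\mathcal{F}}$ has vertex set $\mathcal{F}$, with $C,C'\in\mathcal{F}$ adjacent if $C\cap C'\neq\emptyset$ or there are $u\in C$, $v\in C'$ with $uv\in E$. A $t$-shallow minor of $G$ is a graph obtained by contracting edges and deleting edges and vertices such that each vertex of the minor corresponds to a cluster of vertices of $G$ inducing a $t$-shallow subgraph; $\nabla_t(G)$ is the supremum of $|E(K)|/|V(K)|$ over all $t$-shallow minors $K$ of $G$. *)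

From mathcomp Require Import all_boot all_order all_algebra.
From mathcomp Require Import boolp.
Set Implicit Arguments. Unset Strict Implicit. Unset Printing Implicit Defensive.
Import Order.TTheory GRing.Theory Num.Theory.
Local Open Scope ring_scope.

(* A path
   h = x_0, x_1, ..., x_n = v is encoded as h followed by the seq p = x_1..x_n. *)
Definition t_shallow (T : finType) (e : rel T) (t : nat) (C : {set T}) : Prop :=
  exists2 h, h \in C &
    forall v, v \in C ->
      exists p : seq T,
        [/\ path (fun x y => [&& e x y, x \in C & y \in C]) h p,
            last h p = v & (size p <= t)%N].

(* (kappa,t)-packing: F is a multiset (a list; repetitions allowed) of
   vertex subsets, each inducing a t-shallow subgraph, and every vertex lies
   in at most kappa members of F (counted with multiplicity). *)
Definition packing (T : finType) (e : rel T) (kappa t : nat) (F : seq {set T}) : Prop :=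
  (forall C, C \in F -> t_shallow e t C) /\
  (forall v : T, (count (fun C : {set T} => v \in C) F <= kappa)%N).

Definition pack_adj (T : finType) (e : rel T) (C C' : {set T}) : bool :=
  [exists u in C, exists v in C', (u == v) || e u v].

(* Vertices of G_F are the indices 'I_(size F) (members of the multiset);
   edges are unordered pairs {i,j}, i <> j, encoded as (i,j) with i < j. *)
Definition packing_graph_edges (T : finType) (e : rel T) (F : seq {set T}) :
  {set 'I_(size F) * 'I_(size F)} :=
  [set p : 'I_(size F) * 'I_(size F) | ((p.1 < p.2)%N) && pack_adj e (nth set0 F p.1) (nth set0 F p.2)].

(* A t-shallow minor K of G with vertex set 'I_k: pairwise disjoint clusters
   B a (a : 'I_k), each inducing a t-shallow subgraph of G (vertices outside
   all clusters are deleted), and an edge set Ek of unordered pairs {a,b},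
   encoded as (a,b) with a < b, such that each edge of K is realised by an
   edge of G between the two clusters (other edges deleted). *)
Definition shallow_minor (T : finType) (e : rel T) (t k : nat)
    (B : {ffun 'I_k -> {set T}}) (Ek : {set 'I_k * 'I_k}) : Prop :=
  [/\ forall a, t_shallow e t (B a),
      forall a b, a != b -> [disjoint B a & B b] &
      forall p, p \in Ek ->
        (p.1 < p.2)%N /\ exists u v, [/\ u \in B p.1, v \in B p.2 & e u v]].

(* Since clusters are disjoint and nonempty, |V(K)| <= |V(G)|, so the sup is
   a finite maximum; 0 is included (harmless: all ratios are >= 0, and it is
   the value when G has no vertices, i.e. no minor exists). *)
Definition nabla (T : finType) (e : rel T) (t : nat) : rat :=
  \big[Num.max/0]_(k < #|T|.+1)
   \big[Num.max/0]_(B : {ffun 'I_k -> {set T}})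
    \big[Num.max/0]_(Ek : {set 'I_k * 'I_k} | `[< shallow_minor e t B Ek >])
      ((#|Ek|)%:R / (k : nat)%:R).

From mathcomp Require Import all_boot all_order all_algebra fingroup perm.
From mathcomp Require Import boolp ring.
Import Order.TTheory GRing.Theory Num.Theory.
Set Implicit Arguments. Unset Strict Implicit. Unset Printing Implicit Defensive.

(* Fix a centre h_C of every member C of the packing, joined to each vertex
   of C by a path of length at most t inside G[C].  An adjacent pair {C, C'}
   is central when one centre lies in the other member; as every vertex lies
   in at most kappa members there are at most kappa |F| central pairs.
   For an ordering s of F, carve clusters greedily: the cluster of C is the
   t-ball around h_C in G[C] minus the vertices taken by earlier clusters.
   The clusters are disjoint and t-shallow, so adjacent clusters span a
   t-shallow minor and each ordering has at most nabla_t(G) |F| adjacent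
   pairs of clusters.  A non-central pair {C, C'} is witnessed by a walk of
   at most 2(t+1) vertices (radius path in C, shared vertex or edge, radius
   path in C'), which meets at most 2 kappa (t+1) members; whenever C and C'
   are the first two of them in s, their clusters are adjacent.  This happens
   for a fraction at least 2 / (2 kappa (t+1))^2 of the orderings, and
   averaging over all orderings bounds the non-central pairs by
   2 kappa^2 (t+1)^2 nabla_t(G) |F|. *)

Lemma card_nth_count (X : Type) (x0 : X) (s : seq X) (P : pred X) :
  #|[set k : 'I_(size s) | P (nth x0 s k)]| = count P s.
Proof.
rewrite -sum1_card -sum1_count (big_nth x0) big_mkord.
by apply: eq_bigl => k; rewrite inE.
Qed.

Lemma card_set_sum (I : finType) (P : pred I) : #|[set i | P i]| = \sum_i P i.
Proof. by rewrite -sum1_card big_mkcond; apply: eq_bigr => i _; rewrite inE; case: P. Qed.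

Lemma sum_card_rel (I J : finType) (A : {pred I}) (R : I -> J -> bool) :
  \sum_(i in A) #|[set j | R i j]| = \sum_j #|[set i in A | R i j]|.
Proof.
under eq_bigr do rewrite card_set_sum.
rewrite exchange_big; apply: eq_bigr => j _.
rewrite -[RHS]sum1_card big_mkcond [RHS]big_mkcond; apply: eq_bigr => i _.
by rewrite !inE; case: (i \in A); case: R.
Qed.

Lemma card_pairs (I J : finType) (R : I -> J -> bool) :
  #|[set p : I * J | R p.1 p.2]| = \sum_j #|[set i | R i j]|.
Proof.
rewrite card_set_sum -(pair_big xpredT xpredT (fun i j => nat_of_bool (R i j))) exchange_big.
by apply: eq_bigr => j _; rewrite card_set_sum.
Qed.

Lemma path_find_prefix (T : eqType) (r : rel T) (a : pred T) x p :
  path r x p -> has a p ->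
  exists q y, [/\ prefix (rcons q y) p, path r x q, r (last x q) y, a y & ~~ has a q].
Proof.
move=> xp has_a; move: xp; case/split_find: has_a => y q1 q2 ay no_a.
rewrite cat_path rcons_path.
by case/andP=> /andP[xq1 q1y] _; exists q1, y; rewrite prefix_prefix.
Qed.

Section FirstIn.
Variable n : nat.
Implicit Types (M : {set 'I_n}) (s : {perm 'I_n}) (x y : 'I_n).

Definition first_in M s x := (x \in M) && [forall k in M, (k != x) ==> (s x < s k)].

Lemma first_in_uniq M s x y : first_in M s x -> first_in M s y -> x = y.
Proof.
move=> /andP[xM /forall_inP min_x] /andP[yM /forall_inP min_y].
apply/eqP; apply: contraT => nxy.
have := implyP (min_x y yM); rewrite eq_sym nxy => /(_ isT) /ltn_trans lt_xy.
by have := implyP (min_y x xM); rewrite nxy => /(_ isT) /lt_xy; rewrite ltnn.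
Qed.

Lemma first_in_exists M s x : x \in M -> exists2 y, y \in M & first_in M s y.
Proof.
move=> xM; case: (arg_minnP (fun k => s k) xM) => y yM min_y.
exists y => //; apply/andP; split => //; apply/forall_inP => k kM; apply/implyP => nky.
rewrite ltn_neqAle min_y // andbT.
by apply: contra nky => /eqP /val_inj /perm_inj ->.
Qed.

Lemma first_in_tpermR M s x y :
  y \in M -> first_in M s x -> first_in M (tperm x y * s)%g y.
Proof.
move=> yM /andP[xM /forall_inP min_x]; rewrite /first_in yM.
apply/forall_inP => k kM; apply/implyP => nky; rewrite !permM tpermR.
case: tpermP => [kx|ky|nkx _]; last exact: (implyP (min_x k kM)) (introN eqP nkx).
- by subst k; apply: (implyP (min_x y yM)); rewrite eq_sym.
- by rewrite ky eqxx in nky.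
Qed.

Lemma first_in_tpermD M s x a b : a \in M -> b \in M -> a != x -> b != x ->
  first_in M s x -> first_in M (tperm a b * s)%g x.
Proof.
move=> aM bM ax bx /andP[xM /forall_inP min_x]; rewrite /first_in xM.
apply/forall_inP => k kM; apply/implyP => nkx; rewrite !permM (tpermD ax bx).
by case: tpermP => [_|_|_ _]; apply: (implyP (min_x _ _)).
Qed.

(* Transpositions of [M] act transitively on the possible first elements of
   [M], so each of them is first for the same number of permutations of [S]. *)
Lemma card_first_in (S : {set {perm 'I_n}}) M x : x \in M ->
  (forall s a b, s \in S -> a \in M -> b \in M -> (tperm a b * s)%g \in S) ->
  #|[set s in S | first_in M s x]| * #|M| = #|S|.
Proof.
move=> xM S_tperm.
have card_le y z : y \in M -> z \in M ->
    #|[set s in S | first_in M s y]| <= #|[set s in S | first_in M s z]|.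
  move=> yM zM; rewrite -(card_imset _ (mulgI (tperm y z))).
  apply/subset_leq_card/subsetP => _ /imsetP[s /setIdP[sS fs] ->].
  by rewrite inE S_tperm ?first_in_tpermR.
have card_eq y : y \in M ->
    #|[set s in S | first_in M s y]| = #|[set s in S | first_in M s x]|.
  by move=> yM; apply/eqP; rewrite eqn_leq !card_le.
rewrite mulnC -sum_nat_const -(eq_bigr _ card_eq) -sum1_card.
rewrite (eq_bigr (fun s => \sum_(y in M) first_in M s y)); last first.
  move=> s _; have [y yM fy] := first_in_exists s xM.
  rewrite (bigD1 y) //= fy big1 // => z /andP[zM nzy].
  by apply/eqP; rewrite eqb0; apply: contra nzy => /first_in_uniq /(_ fy) ->.
rewrite exchange_big; apply: eq_bigr => y _.
rewrite -sum1_card big_mkcond [RHS]big_mkcond; apply: eq_bigr => s _.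
by rewrite inE; case: (s \in S); case: (first_in M s y).
Qed.

Lemma card_first_two (N : {set 'I_n}) x y : x \in N -> y \in N -> x != y ->
  #|[set s | first_in N s x && first_in (N :\ x) s y]| * (#|N| * #|N|.-1) = #|{perm 'I_n}|.
Proof.
move=> xN yN nxy.
have card_x := @card_first_in [set: {perm 'I_n}] N x xN (fun _ _ _ _ _ _ => in_setT _).
rewrite setIdE setTI in card_x.
have yNx : y \in N :\ x by rewrite !inE eq_sym nxy.
have card_y := @card_first_in [set s | first_in N s x] (N :\ x) y yNx.
have -> : #|N|.-1 = #|N :\ x| by rewrite (cardsD1 x N) xN.
rewrite -cardsT -card_x [#|N| * _]mulnC mulnA -card_y.
- by congr (_ * _ * _); apply: eq_card => s; rewrite !inE.
- move=> s a b; rewrite !inE => fx /andP[ax aN] /andP[bx bN].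
  exact: first_in_tpermD.
Qed.

Lemma card_first_two_either (S : {set {perm 'I_n}}) (N : {set 'I_n}) x y :
  x \in N -> y \in N -> x != y ->
  (forall s, first_in N s x -> first_in (N :\ x) s y -> s \in S) ->
  (forall s, first_in N s y -> first_in (N :\ y) s x -> s \in S) ->
  2 * #|{perm 'I_n}| <= #|S| * (#|N| * #|N|.-1).
Proof.
move=> xN yN neq_xy S_xy S_yx.
pose Exy := [set s | first_in N s x && first_in (N :\ x) s y].
pose Eyx := [set s | first_in N s y && first_in (N :\ y) s x].
have disj : [disjoint Exy & Eyx].
  apply/pred0P => s /=; rewrite !inE; apply/negbTE/negP.
  by case/andP=> /andP[fx _] /andP[fy _]; move: neq_xy; rewrite (first_in_uniq fx fy) eqxx.
have sub : Exy :|: Eyx \subset S.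
  by apply/subsetP => s; rewrite !inE => /orP[] /andP[]; [apply: S_xy | apply: S_yx].
rewrite mul2n -addnn -{1}(card_first_two xN yN neq_xy).
rewrite -(card_first_two yN xN (contra_neq esym neq_xy)) -mulnDl leq_mul2r.
have /eqP <- : #|Exy :|: Eyx| == #|Exy| + #|Eyx| by rewrite (leq_card_setU Exy Eyx).2.
by rewrite subset_leq_card ?orbT.
Qed.

End FirstIn.

Section ShallowMinors.
Variables (T : finType) (e : rel T) (t : nat).

Lemma nabla_ge0 : (0 <= nabla e t)%R.
Proof. exact: bigmax_ge_id. Qed.

Lemma shallow_minor_card_le k (B : {ffun 'I_k -> {set T}}) (Ek : {set 'I_k * 'I_k}) :
  shallow_minor e t B Ek -> k <= #|T|.
Proof.
case=> shallowB disjB _; have /fin_all_exists [c cB] : forall a, exists c, c \in B a.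
  by move=> a; have [c ? _] := shallowB a; exists c.
rewrite -[k]card_ord; apply: (leq_card c) => a b eq_c; apply/eqP; apply: contraT.
by move=> /disjB /disjointFr /(_ (cB a)); rewrite eq_c cB.
Qed.

Lemma card_minor_edges_le k (B : {ffun 'I_k -> {set T}}) (Ek : {set 'I_k * 'I_k}) :
  shallow_minor e t B Ek -> (#|Ek|%:R <= nabla e t * k%:R :> rat)%R.
Proof.
move=> minor; have [k0|k_gt0] := posnP k.
  suff -> : #|Ek| = 0 by rewrite mulr_ge0 ?nabla_ge0.
  apply/eqP; rewrite -leqn0; apply: leq_trans (max_card _) _.
  by rewrite card_prod card_ord k0.
rewrite -ler_pdivrMr ?ltr0n //.
have k_lt : k < #|T|.+1 by rewrite ltnS (shallow_minor_card_le minor).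
apply: le_trans (le_bigmax _ _ (Ordinal k_lt)).
apply: le_trans (le_bigmax _ _ B).
by apply: le_bigmax_cond; apply/asboolP.
Qed.

Definition cluster_adj (I : finType) (B : I -> {set T}) a b :=
  [exists y in B a, exists z in B b, e y z].

Definition cluster_edges n (B : 'I_n -> {set T}) :=
  [set p : 'I_n * 'I_n | (p.1 < p.2) && cluster_adj B p.1 p.2].

Hypothesis e_sym : symmetric e.

Lemma cluster_adj_sym (I : finType) (B : I -> {set T}) a b :
  cluster_adj B a b = cluster_adj B b a.
Proof.
by apply/exists_inP/exists_inP => -[y yB /exists_inP[z zB yz]];
  exists z => //; apply/exists_inP; exists y; rewrite // e_sym.
Qed.

(* [e_sym] is needed because [g] need not preserve the order of indices. *)
Lemma card_cluster_edges_reindex n k (B : 'I_n -> {set T}) (g : 'I_k -> 'I_n) :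
  (forall a, B a != set0 -> exists a', a = g a') ->
  #|cluster_edges B| <= #|cluster_edges (B \o g)|.
Proof.
move=> onto; pose sortg p := if g p.1 < g p.2 then (g p.1, g p.2) else (g p.2, g p.1).
apply: leq_trans (leq_imset_card sortg _); apply/subset_leq_card/subsetP.
case=> x y /setIdP[/= lt_xy adj_xy].
have [[x' def_x] [y' def_y]] : (exists x', x = g x') /\ (exists y', y = g y').
  case/exists_inP: adj_xy => u uB /exists_inP[v vB _].
  by split; apply: onto; apply/set0Pn; [exists u | exists v].
subst x y; case: (ltngtP x' y') => [lt_xy'|gt_xy'|/val_inj eq_xy]; apply/imsetP.
- by exists (x', y'); rewrite /sortg ?inE /= ?lt_xy ?lt_xy'.
- exists (y', x'); first by rewrite inE /= gt_xy' cluster_adj_sym.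
  by rewrite /sortg /= ltnNge ltnW.
- by rewrite eq_xy ltnn in lt_xy.
Qed.

Lemma card_cluster_edges_le n (B : 'I_n -> {set T}) :
  (forall a, B a != set0 -> t_shallow e t (B a)) ->
  (forall a b, a != b -> [disjoint B a & B b]) ->
  (#|cluster_edges B|%:R <= nabla e t * n%:R :> rat)%R.
Proof.
move=> shallowB disjB; set A := [set a | B a != set0].
pose B' := [ffun a : 'I_#|A| => B (enum_val a)].
have minor : shallow_minor e t B' (cluster_edges B').
  split=> [a | a b neq_ab | p /setIdP[lt_p /exists_inP[u uB /exists_inP[v vB uv]]]].
  - by rewrite ffunE; apply: shallowB; have := enum_valP a; rewrite inE.
  - by rewrite !ffunE disjB // (inj_eq enum_val_inj).
  - by split=> //; exists u, v.
have B'E : cluster_edges B' = cluster_edges (B \o enum_val).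
  by apply/setP => p; rewrite !inE /cluster_adj !ffunE.
have le_edges : #|cluster_edges B| <= #|cluster_edges B'|.
  rewrite B'E; apply: card_cluster_edges_reindex => a a_ne.
  have aA : a \in A by rewrite inE.
  by exists (enum_rank_in aA a); rewrite enum_rankK_in.
apply: le_trans (_ : #|cluster_edges B'|%:R <= _)%R; first by rewrite ler_nat.
apply: le_trans (card_minor_edges_le minor) _.
by rewrite ler_wpM2l ?nabla_ge0 // ler_nat -[n in (_ <= n)]card_ord max_card.
Qed.

End ShallowMinors.

Section Balls.
Variables (T : finType) (e : rel T) (t : nat).
Implicit Types (D : {set T}) (c : T) (p : seq T).

Definition induced D x y := [&& e x y, x \in D & y \in D].

Definition ball D c : {set T} :=
  [set y | `[< exists p, [/\ c \in D, path (induced D) c p, last c p = y & size p <= t] >]].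

Lemma induced_path_sub D c p : c \in D -> path (induced D) c p -> {subset c :: p <= D}.
Proof.
elim: p c => [|y p IHp] c cD /=; first by move=> _ x /[!inE] /eqP ->.
case/andP=> /and3P[_ _ yD] yp x /[!inE] /orP[/eqP -> // | xp].
exact: IHp yD yp x xp.
Qed.

Lemma mem_ball D c p :
  c \in D -> path (induced D) c p -> size p <= t -> last c p \in ball D c.
Proof. by move=> cD cp sp; rewrite inE; apply/asboolP; exists p. Qed.

Lemma ball_sub D c : ball D c \subset D.
Proof.
apply/subsetP => _ /[!inE] /asboolP[p [cD cp <- _]].
exact: induced_path_sub cD cp _ (mem_last c p).
Qed.

Lemma ball_shallow D c : ball D c != set0 -> t_shallow e t (ball D c).
Proof.
case/set0Pn => y /[!inE] /asboolP[p0 [cD _ _ _]].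
have c_ball : c \in ball D c by apply: (@mem_ball D c [::]).
exists c => // _ /[!inE] /asboolP[p [_ cp <- sp]].
have p_ball : {subset c :: p <= ball D c}.
  move=> w w_p; case/splitPl: w_p cp sp => p1 p2 <-.
  rewrite cat_path size_cat => /andP[cp1 _] sp.
  by apply: mem_ball => //; apply: leq_trans sp; apply: leq_addr.
exists p; split=> //; apply: (sub_in_path (P := mem (ball D c))) cp.
  by move=> a b /[!inE] a_ball b_ball /and3P[ab _ _]; rewrite /= ab a_ball b_ball.
by apply/allP.
Qed.

End Balls.

Section Carving.
Variables (T : finType) (e : rel T) (t n : nat).
Variables (C : 'I_n -> {set T}) (h : 'I_n -> T) (s : {perm 'I_n}).

Fixpoint taken (r : nat) : {set T} :=
  if r is r'.+1 then
    taken r' :|: \bigcup_(j | s j == r' :> nat) ball e t (C j :\: taken r') (h j)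
  else set0.

Definition carve j := ball e t (C j :\: taken (s j)) (h j).

Lemma takenE r : taken r = \bigcup_(j | s j < r) carve j.
Proof.
elim: r => [|r IHr] /=; first by rewrite big_pred0.
apply/setP => x; rewrite inE {1}IHr; apply/orP/bigcupP => [[]|[j]].
- by case/bigcupP => j lt_jr xj; exists j; first exact: ltnW.
- by case/bigcupP => j /eqP sj xj; exists j; rewrite /carve ?sj.
- rewrite ltnS leq_eqVlt => /orP[/eqP sj | lt_jr] xj.
    by right; apply/bigcupP; exists j; rewrite // -sj.
  by left; apply/bigcupP; exists j.
Qed.

Lemma carve_sub j : carve j \subset C j.
Proof. exact: subset_trans (ball_sub _ _ _ _) (subsetDl _ _). Qed.

Lemma carve_disjoint a b : a != b -> [disjoint carve a & carve b].
Proof.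
wlog lt_ab : a b / s a < s b.
  move=> wlog_ab neq_ab; case: (ltngtP (s a) (s b)) => [|gt_ab|/val_inj/perm_inj eq_ab].
  - by move/wlog_ab; apply.
  - by rewrite disjoint_sym wlog_ab // eq_sym.
  - by rewrite eq_ab eqxx in neq_ab.
move=> _; apply/pred0P => x /=; apply/negbTE/negP => /andP[xa xb].
have := subsetP (ball_sub e t _ (h b)) x xb.
by rewrite inE takenE => /andP[/bigcupP[]]; exists a.
Qed.

Lemma carve_shallow j : carve j != set0 -> t_shallow e t (carve j).
Proof. exact: ball_shallow. Qed.

Hypothesis hC : forall j, h j \in C j.

Lemma mem_carve j q : path (induced e (C j)) (h j) q -> size q <= t ->
  {in h j :: q, forall x, x \notin taken (s j)} -> last (h j) q \in carve j.
Proof.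
move=> jq sq untaken; apply: mem_ball => //; first by rewrite inE untaken ?mem_head ?hC.
apply: (sub_in_path (P := mem (h j :: q))) jq; last exact/allP.
move=> a b a_q b_q /and3P[ab aC bC].
by rewrite /induced ab !inE aC bC !untaken.
Qed.

Hypothesis e_sym : symmetric e.

Section FirstTwo.
Variables (i j : 'I_n) (P P' : seq T).
Let L := h i :: P ++ h j :: P'.
Hypothesis lt_ij : s i < s j.
Hypothesis first_two : forall k, k != i -> k != j -> has (mem (C k)) L -> s j < s k.

Lemma taken_on_walk r x :
  x \in L -> x \in taken r -> r <= s j -> (s i < r) && (x \in carve i).
Proof.
move=> xL; rewrite takenE => /bigcupP[k lt_kr xk] le_rj.
have lt_kj := leq_trans lt_kr le_rj.
have [<- | neq_ki] := eqVneq k i; first by rewrite lt_kr xk.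
have [eq_kj | neq_kj] := eqVneq k j; first by rewrite eq_kj ltnn in lt_kj.
have meets : has (mem (C k)) L by apply/hasP; exists x => //; apply: subsetP (carve_sub k) x xk.
by have := ltn_trans lt_kj (first_two neq_ki neq_kj meets); rewrite ltnn.
Qed.

Hypothesis hj_Ci : h j \notin C i.
Hypotheses (iP : path (induced e (C i)) (h i) P) (size_P : size P <= t).
Hypotheses (jP' : path (induced e (C j)) (h j) P') (size_P' : size P' <= t).
Hypothesis uv : (last (h i) P == last (h j) P') || e (last (h i) P) (last (h j) P').

Lemma last_carve_second q : {subset q <= P'} ->
  path (induced e (C j)) (h j) q -> size q <= t -> ~~ has (mem (carve i)) q ->
  last (h j) q \in carve j.
Proof.
move=> q_P' jq size_q no_i; apply: mem_carve => // x x_q; apply/negP => x_taken.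
have xL : x \in L by move: x_q; rewrite /L !inE mem_cat !inE => /orP[->|/q_P'->]; rewrite ?orbT.
have /andP[_ x_i] := taken_on_walk xL x_taken (leqnn _).
move: x_q; rewrite inE => /orP[/eqP x_hj | x_q].
  by move: hj_Ci; rewrite -x_hj (subsetP (carve_sub i)).
exact: negP (hasPn no_i x x_q) x_i.
Qed.

(* If [P'] enters the cluster of [i], the edge by which it first does so joins
   the two clusters; otherwise [P'] ends in the cluster of [j] and [uv] is
   such an edge. *)
Lemma cluster_adj_first_two : cluster_adj e carve i j.
Proof.
have u_i : last (h i) P \in carve i.
  apply: mem_carve => // x x_P; apply/negP => x_taken.
  have xL : x \in L by move: x_P; rewrite /L !inE mem_cat => /orP[->|->]; rewrite ?orbT.
  by have := taken_on_walk xL x_taken (ltnW lt_ij); rewrite ltnn.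
have [hit | miss] := boolP (has (mem (carve i)) P').
  have [q [y [pre jq qy y_i no_i]]] := path_find_prefix jP' hit.
  have q_P' : {subset q <= P'}.
    by move=> x x_q; apply: (mem_infix (prefixW pre)); rewrite mem_rcons inE x_q orbT.
  have size_q : size q <= t.
    by apply: leq_trans size_P'; apply: leq_trans (size_prefix pre); rewrite size_rcons.
  have z_j := last_carve_second q_P' jq size_q no_i.
  case/and3P: qy => zy _ _.
  by apply/exists_inP; exists y => //; apply/exists_inP; exists (last (h j) q); rewrite // e_sym.
have v_j := last_carve_second (fun x => id) jP' size_P' miss.
have v_i : last (h j) P' \notin carve i.
  move: (mem_last (h j) P'); rewrite inE => /orP[/eqP -> | v_P'].
    by apply: contra hj_Ci; apply: (subsetP (carve_sub i)).
  exact: hasPn miss _ v_P'.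
apply/exists_inP; exists (last (h i) P) => //; apply/exists_inP; exists (last (h j) P') => //.
by case/orP: uv => // /eqP eq_uv; rewrite -eq_uv u_i in v_i.
Qed.

End FirstTwo.

Lemma cluster_adj_first_in i j P P' :
  let N := [set k | has (mem (C k)) (h i :: P ++ h j :: P')] in
  first_in N s i -> first_in (N :\ i) s j -> h j \notin C i ->
  path (induced e (C i)) (h i) P -> size P <= t ->
  path (induced e (C j)) (h j) P' -> size P' <= t ->
  (last (h i) P == last (h j) P') || e (last (h i) P) (last (h j) P') ->
  cluster_adj e carve i j.
Proof.
move=> N /andP[_ /forall_inP first_i] /andP[/setD1P[neq_ji jN] /forall_inP first_j].
have lt_ij : s i < s j by apply: (implyP (first_i j jN)).
apply: cluster_adj_first_two => // k neq_ki neq_kj meets.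
by apply: (implyP (first_j k _)); rewrite // !inE neq_ki.
Qed.

End Carving.

Section Packing.
Variables (T : finType) (e : rel T) (kappa t : nat) (F : seq {set T}).
Local Notation n := (size F).
Local Notation C := (fun i : 'I_n => nth set0 F i).
Variable h : 'I_n -> T.
Hypothesis load : forall v, count (fun D : {set T} => v \in D) F <= kappa.

Lemma card_containing_le v : #|[set k : 'I_n | v \in C k]| <= kappa.
Proof. by rewrite (card_nth_count set0 F (fun D => v \in D)). Qed.

Lemma card_meeting_le L : #|[set k : 'I_n | has (mem (C k)) L]| <= size L * kappa.
Proof.
elim: L => [|x L IHL]; first by rewrite leqn0 cards_eq0; apply/eqP/setP => k; rewrite !inE.
have -> : [set k : 'I_n | has (mem (C k)) (x :: L)] =
          [set k | x \in C k] :|: [set k | has (mem (C k)) L].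
  by apply/setP => k; rewrite !inE.
by rewrite mulSn (leq_trans (leq_card_setU _ _)) // leq_add ?card_containing_le.
Qed.

Definition central := [set p : 'I_n * 'I_n |
  (p.1 < p.2) && ((h p.2 \in C p.1) || (h p.1 \in C p.2))].

Lemma card_central_le : #|central| <= n * kappa.
Proof.
pose sort (p : 'I_n * 'I_n) := if p.1 < p.2 then p else (p.2, p.1).
pose D := [set p : 'I_n * 'I_n | h p.2 \in C p.1].
have sub : central \subset sort @: D.
  apply/subsetP => -[a b]; rewrite inE /= => /andP[lt_ab /orP[in_a | in_b]]; apply/imsetP.
    by exists (a, b); rewrite /sort ?inE /= ?lt_ab.
  by exists (b, a); rewrite /sort ?inE //= ltnNge ltnW.
apply: leq_trans (subset_leq_card sub) _; apply: leq_trans (leq_imset_card _ _) _.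
rewrite (card_pairs (fun a b => h b \in C a)).
apply: (@leq_trans (\sum_(b < n) kappa)); first by apply: leq_sum => b _; apply: card_containing_le.
by rewrite sum_nat_const card_ord.
Qed.

Hypothesis e_sym : symmetric e.
Hypothesis hC : forall i, h i \in C i.
Hypothesis h_radius : forall i v, v \in C i ->
  exists p, [/\ path (induced e (C i)) (h i) p, last (h i) p = v & size p <= t].

Local Notation carve_edges s := (cluster_edges e (carve e t C h s)).

Lemma card_perm_noncentral p : p \in packing_graph_edges e F :\: central ->
  2 * #|{perm 'I_n}| <= #|[set s | p \in carve_edges s]| * (2 * kappa * t.+1) ^ 2.
Proof.
case: p => i j /setDP[]; rewrite !inE /= => /andP[lt_ij adj_ij].
rewrite lt_ij negb_or => /andP[hj_Ci hi_Cj].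
case/exists_inP: adj_ij => u uCi /exists_inP[v vCj uv].
have [P [iP uP size_P]] := h_radius uCi.
have [P' [jP' vP' size_P']] := h_radius vCj.
set N := [set k | has (mem (C k)) (h i :: P ++ h j :: P')].
have N_sym : N = [set k | has (mem (C k)) (h j :: P' ++ h i :: P)].
  by apply/setP => k; rewrite !inE -!cat_cons !has_cat orbC.
have iN : i \in N by rewrite inE /= hC.
have jN : j \in N by rewrite inE /= has_cat /= hC !orbT.
have neq_ij : i != j by apply: contraTneq lt_ij => ->; rewrite ltnn.
have size_N : #|N| <= 2 * kappa * t.+1.
  apply: leq_trans (card_meeting_le _) _; rewrite mulnAC leq_mul2r /= size_cat /=.
  by rewrite mul2n -addnn -addSn leq_add ?orbT.
apply: leq_trans (card_first_two_either (S := [set s | (i, j) \in carve_edges s]) iN jN neq_ij _ _) _.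
- move=> s first_i first_j; rewrite inE /cluster_edges inE /= lt_ij.
  by apply: cluster_adj_first_in first_i first_j _ _ _ _ _ _ => //; rewrite uP vP'.
- move=> s first_j first_i; rewrite inE /cluster_edges inE /= lt_ij cluster_adj_sym //.
  rewrite N_sym in first_j first_i.
  by apply: cluster_adj_first_in first_j first_i _ _ _ _ _ _ => //; rewrite uP vP' eq_sym e_sym.
- rewrite leq_mul2l expnS expn1; apply/orP; right.
  exact: leq_mul size_N (leq_trans (leq_pred _) size_N).
Qed.

Lemma card_noncentral_le :
  (#|packing_graph_edges e F :\: central|%:R * 2
     <= ((2 * kappa * t.+1) ^ 2)%:R * (nabla e t * n%:R) :> rat)%R.
Proof.
set Nc := _ :\: central; set Q := (2 * kappa * t.+1) ^ 2; set m := #|{perm 'I_n}|.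
have double_count : \sum_(p in Nc) #|[set s | p \in carve_edges s]| <= \sum_s #|carve_edges s|.
  rewrite sum_card_rel; apply: leq_sum => s _.
  by apply/subset_leq_card/subsetP => p /[!inE] /andP[].
have count_nat : #|Nc| * (2 * m) <= (\sum_s #|carve_edges s|) * Q.
  apply: leq_trans (leq_mul double_count (leqnn Q)).
  rewrite -sum_nat_const big_distrl; apply: leq_sum => p pNc.
  exact: card_perm_noncentral.
have carve_le s : (#|carve_edges s|%:R <= nabla e t * n%:R :> rat)%R.
  apply: card_cluster_edges_le => // [a | a b]; [exact: carve_shallow | exact: carve_disjoint].
have sum_le : ((\sum_s #|carve_edges s|)%:R <= m%:R * (nabla e t * n%:R) :> rat)%R.
  rewrite natr_sum; apply: le_trans (ler_sum _ (fun s _ => carve_le s)) _.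
  by rewrite sumr_const mulr_natl.
have m_gt0 : (0 < m%:R :> rat)%R by rewrite ltr0n; apply/card_gt0P; exists 1%g.
rewrite -(ler_pM2r m_gt0) -mulrA -natrM.
apply: le_trans (_ : (\sum_s #|carve_edges s|)%:R * Q%:R <= _)%R.
  by rewrite -!natrM ler_nat.
by rewrite mulrC -mulrA (mulrC _ (m%:R)%R) ler_wpM2l ?ler0n.
Qed.

End Packing.

Local Open Scope ring_scope.

Theorem mainTheorem6 (T : finType) (e : rel T)
    (e_sym : symmetric e) (e_irr : irreflexive e)
    (kappa t : nat) (F : seq {set T}) (HF : packing e kappa t F) :
  (#|packing_graph_edges e F|)%:R / (size F)%:R
    <= 2 * (t.+1)%:R ^+ 2 * kappa%:R ^+ 2 * nabla e t + kappa%:R :> rat.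
Proof.
case: HF => shallowF load.
have /fin_all_exists2[h hC h_radius] : forall i : 'I_(size F),
    exists2 c, c \in nth set0 F i & forall v, v \in nth set0 F i -> exists p,
      [/\ path (induced e (nth set0 F i)) c p, last c p = v & (size p <= t)%N].
  by move=> i; exact: shallowF (mem_nth _ (ltn_ord i)).
set H := packing_graph_edges e F; set Cen := central h.
have rhs_ge0 : 0 <= 2 * (t.+1)%:R ^+ 2 * kappa%:R ^+ 2 * nabla e t + kappa%:R :> rat.
  by rewrite addr_ge0 ?mulr_ge0 ?nabla_ge0.
have [n0 | n_gt0] := posnP (size F); first by rewrite [X in _ / X%:R]n0 invr0 mulr0.
rewrite ler_pdivrMr ?ltr0n //.
have H_le : (#|H| <= #|H :\: Cen| + size F * kappa)%N.
  rewrite -(cardsID Cen H) addnC leq_add2l.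
  exact: leq_trans (subset_leq_card (subsetIr _ _)) (card_central_le h load).
apply: le_trans (_ : (#|H :\: Cen| + size F * kappa)%:R <= _); first by rewrite ler_nat.
rewrite natrD natrM mulrDl mulrC lerD //.
rewrite -(ler_pM2r (ltr0n _ 2)); apply: le_trans (card_noncentral_le load e_sym hC h_radius) _.
by rewrite natrX !natrM le_eqVlt; apply/orP; left; apply/eqP; ring.
Qed.
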